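(* Let $q\in[0,1)$, $\beta>0$, and $s_0,s_1\in(-1,0)$ with $|s_0|>|s_1|$. Fix integers $x_1(0)>x_2(0)$. Let $\mathbf{x}(t)=(x_1(t),x_2(t))$ be the two-particle system with parameters $(s_0,s_1)$ started from $(x_1(0),x_2(0))$. Let $y_1'(0)$, with $x_2(0)<y_1'(0)\le x_1(0)$, be random with distribution $$\mathbb{P}(y_1'(0)=y)=\varphi_{q,s_1^2/s_0^2,\,s_1^2}\bigl(y-x_2(0)-1\mid x_1(0)-x_2(0)-1\bigr),$$ and let $\mathbf{y}(t)=(y_1(t),y_2(t))$ be the two-particle system with parameters $(s_1,s_0)$ started from $(y_1'(0),x_2(0))$. Then the trajectories of the second particle, $\{x_2(t)\}_{t\in\mathbb{Z}_{\ge0}}$ and $\{y_2(t)\}_{t\in\mathbb{Z}_{\ge0}}$, have the same distribution.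
   Context: $(a;q)_k=\prod_{i=0}^{k-1}(1-aq^i)$. For $0\le j\le m$: $\varphi_{q,\mu,\nu}(j\mid m)=\mu^j\frac{(\nu/\mu;q)_j(\mu;q)_{m-j}}{(\nu;q)_m}\frac{(q;q)_m}{(q;q)_j(q;q)_{m-j}}$, where $\mu^j(\nu/\mu;q)_j$ means $\prod_{i=0}^{j-1}(\mu-\nu q^i)$. Two-particle system with parameters $(\sigma_1,\sigma_2)$ (with $\sigma_i\in(-1,0)$, and $\beta$, $q$ fixed): a discrete-time Markov chain on pairs of integers $x_1(t)>x_2(t)$. At each step, first $x_1$ jumps right by $h_0\in\{0,1\}$ with $\mathbb{P}(h_0=1)=\frac{\beta\sigma_1^2}{1+\beta\sigma_1^2}$. Then, with $g=x_1(t)-x_2(t)-1$, the particle $x_2$ jumps right by $h_1\in\{0,1\}$ with $\mathbb{P}(h_1=1\mid h_0=0)=\frac{\beta\sigma_2^2(1-q^g)}{1+\beta\sigma_2^2}$ and $\mathbb{P}(h_1=1\mid h_0=1)=\frac{\beta\sigma_2^2+q^g\sigma_2^2}{1+\beta\sigma_2^2}$ (with $0^0=1$). *)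

From mathcomp Require Import all_boot all_order all_algebra.
From mathcomp Require Import reals.
Set Implicit Arguments. Unset Strict Implicit. Unset Printing Implicit Defensive.
Import Order.TTheory GRing.Theory Num.Theory.
Local Open Scope ring_scope.

Section TwoParticle.
Variable R : realType.

Definition qpoch (a q : R) (k : nat) : R := \prod_(i < k) (1 - a * q ^+ i).

(* phi_{q,mu,nu}(j | m), with mu^j (nu/mu;q)_j := prod_{i<j} (mu - nu q^i) *)
Definition phi (q mu nu : R) (j m : nat) : R :=
  (\prod_(i < j) (mu - nu * q ^+ i)) * qpoch mu q (m - j) / qpoch nu q m
  * (qpoch q q m / (qpoch q q j * qpoch q q (m - j))).

(* gap g = x1 - x2 - 1 (as a nat; the chain keeps x1 > x2) *)
Definition gap (st : int * int) : nat := absz (st.1 - st.2 - 1)%R.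

Definition step_prob (q beta sg1 sg2 : R) (st : int * int) (h0 h1 : bool) : R :=
  let p0 := beta * sg1 ^+ 2 / (1 + beta * sg1 ^+ 2) in
  let qg := q ^+ gap st in
  let p1 := if h0 then (beta * sg2 ^+ 2 + qg * sg2 ^+ 2) / (1 + beta * sg2 ^+ 2)
            else beta * sg2 ^+ 2 * (1 - qg) / (1 + beta * sg2 ^+ 2) in
  (if h0 then p0 else 1 - p0) * (if h1 then p1 else 1 - p1).

Definition next (st : int * int) (h0 h1 : bool) : int * int :=
  (st.1 + (h0 : nat)%:Z, st.2 + (h1 : nat)%:Z).

Fixpoint fut_prob (q beta sg1 sg2 : R) (st : int * int) (a : seq int) : R :=
  match a with
  | [::] => 1
  | a1 :: a' =>
      \sum_(h0 : bool) \sum_(h1 : bool)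
        (if (st.2 + (h1 : nat)%:Z == a1) then
           step_prob q beta sg1 sg2 st h0 h1 * fut_prob q beta sg1 sg2 (next st h0 h1) a'
         else 0)
  end.

(* P(x2(0) = a_0, ..., x2(T) = a_T) for the system with parameters
   (sg1, sg2) started deterministically from st *)
Definition traj2_prob (q beta sg1 sg2 : R) (st : int * int) (a : seq int) : R :=
  match a with
  | [::] => 1
  | a0 :: a' => if st.2 == a0 then fut_prob q beta sg1 sg2 st a' else 0
  end.

End TwoParticle.

From Pilot Require Import Defs.
From mathcomp Require Import all_boot all_order all_algebra.
From mathcomp Require Import reals ring lra zify.
Import Order.TTheory GRing.Theory Num.Theory.
Set Implicit Arguments. Unset Strict Implicit. Unset Printing Implicit Defensive.
Local Open Scope ring_scope.

(* Both systems are Markov chains in the coordinates (x2, gap).  The kernel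
   Lambda(g, j) = phi_{q, s1^2/s0^2, s1^2}(j | g) intertwines them: for each move
   of the second particle, P_x Lambda = Lambda P_y, which entrywise amounts to a
   few rational identities between q-Pochhammer products.  Lambda is stochastic
   (q-Chu-Vandermonde, obtained from a Pascal-type recurrence of phi in m), so
   induction on the length of the observed trajectory of x2 gives the claim. *)

Definition gap_step_prob (R : realType) (q beta A B : R) (g : nat) (h0 h1 : bool) : R :=
  let p0 := beta * A / (1 + beta * A) in
  let qg := q ^+ g in
  let p1 := if h0 then (beta * B + qg * B) / (1 + beta * B)
            else beta * B * (1 - qg) / (1 + beta * B) in
  (if h0 then p0 else 1 - p0) * (if h1 then p1 else 1 - p1).

Lemma big_ord_pascal (V : nmodType) n (a b c d : nat -> V) :
  a 0%N + d 0%N = b 0%N ->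
  (forall k, (k < n)%N -> a k.+1 + d k.+1 = b k.+1 + c k) ->
  a n.+1 = c n ->
  \sum_(k < n.+2) a k + \sum_(k < n.+1) d k = \sum_(k < n.+1) b k + \sum_(k < n.+1) c k.
Proof.
move=> eq0 eqS eq_last.
have eq_mid : \sum_(k < n) (a k.+1 + d k.+1) = \sum_(k < n) (b k.+1 + c k).
  by apply: eq_bigr => k _; apply: eqS.
rewrite (big_ord_recl n.+1) (big_ord_recr n) (big_ord_recl n d) (big_ord_recl n b).
rewrite (big_ord_recr n c) /= -eq_last -eq0.
rewrite [LHS](AC ((1*2)*2) ((1*4)*(2*5)*3)) [RHS](AC (3*2) ((1*2)*(3*4)*5)).
by rewrite -!big_split eq_mid.
Qed.

Lemma gap_step_prob_blocked (R : realType) (q beta A B : R) :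
  gap_step_prob q beta A B 0 false true = 0.
Proof. by rewrite /gap_step_prob /= expr0 subrr !(mulr0, mul0r). Qed.

Section PhiAlgebra.
Variables (R : realType) (q beta A B : R).
Hypotheses (q_ge0 : 0 <= q) (q_lt1 : q < 1) (beta_ge0 : 0 <= beta).
Hypotheses (B_ge0 : 0 <= B) (B_lt_A : B < A) (A_lt1 : A < 1).

Lemma qpochS a n : qpoch a q n.+1 = qpoch a q n * (1 - a * q ^+ n).
Proof. by rewrite /qpoch big_ord_recr. Qed.

Lemma one_sub_mul_expr_gt0 a n : a < 1 -> 0 < 1 - a * q ^+ n.
Proof.
move=> a_lt1; rewrite subr_gt0.
have [a_ge0 | a_lt0] := lerP 0 a.
  by apply: le_lt_trans a_lt1; rewrite ler_piMr // exprn_ile1 // ltW.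
by apply: le_lt_trans ltr01; rewrite nmulr_rle0 // exprn_ge0.
Qed.

Lemma qpoch_gt0 a n : a < 1 -> 0 < qpoch a q n.
Proof. by move=> a_lt1; apply: prodr_gt0 => i _; apply: one_sub_mul_expr_gt0. Qed.

Lemma one_sub_exprS_gt0 n : 0 < 1 - q ^+ n.+1.
Proof. by rewrite subr_gt0 exprn_ilt1. Qed.

Lemma one_add_beta_mul_gt0 x : 0 <= x -> 0 < 1 + beta * x.
Proof. by move=> x_ge0; rewrite ltr_wpDr // mulr_ge0. Qed.

Lemma A_gt0 : 0 < A.
Proof. exact: le_lt_trans B_ge0 B_lt_A. Qed.

Lemma B_lt1 : B < 1.
Proof. exact: lt_trans B_lt_A A_lt1. Qed.

Lemma B_div_A_lt1 : B / A < 1.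
Proof. by rewrite ltr_pdivrMr ?mul1r //; apply: le_lt_trans B_lt_A. Qed.

(* Normalise the gaps [m - j] and peel the last factor off every product, so that
   all [phi] become the same q-Pochhammer products times explicit factors. *)
Ltac expand_phi := rewrite /gap_step_prob /phi ?addSn /= ?subSS -?addnS ?addKn ?subn0 ?subnn
  ?addnS ?qpochS ?big_ord_recr ?exprS ?exprD ?expr0 /=.

Ltac field_pos := field; rewrite -?exprD -?exprS;
  repeat (apply/andP; split); apply: lt0r_neq0;
  first [ apply: qpoch_gt0 | apply: one_sub_mul_expr_gt0 | apply: one_sub_exprS_gt0
        | apply: one_add_beta_mul_gt0 | exact: A_gt0 ];
  first [ exact: q_lt1 | exact: B_lt1 | exact: B_div_A_lt1 | exact: B_ge0 | exact: ltW A_gt0 ].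

Local Notation ph j m := (phi q (B / A) B j m).
Local Notation px := (gap_step_prob q beta A B).
Local Notation py := (gap_step_prob q beta B A).

Lemma phi_pascal0 m : ph 0 m.+1 * (1 - B * q ^+ m) = (1 - B / A * q ^+ m) * ph 0 m.
Proof. expand_phi; field_pos. Qed.

Lemma phi_pascal k m : (k < m)%N ->
  ph k.+1 m.+1 * (1 - B * q ^+ m) =
  (1 - B / A * q ^+ (m - k.+1)) * ph k.+1 m + q ^+ (m - k) * (B / A - B * q ^+ k) * ph k m.
Proof.
move=> /subnKC <-; move: (m - k.+1)%N => n.
expand_phi; field_pos.
Qed.

Lemma phi_pascal_diag m : ph m.+1 m.+1 * (1 - B * q ^+ m) = (B / A - B * q ^+ m) * ph m m.
Proof. expand_phi; field_pos. Qed.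

Lemma phi_stay0 g :
  px g true false * ph 0 g.+1 + px g false false * ph 0 g = ph 0 g * py 0 false false.
Proof. expand_phi; field_pos. Qed.

Lemma phi_stay g k : (k < g)%N ->
  px g true false * ph k.+1 g.+1 + px g false false * ph k.+1 g
  = ph k.+1 g * py k.+1 false false + ph k g * py k true false.
Proof. move=> /subnKC <-; move: (g - k.+1)%N => n; expand_phi; field_pos. Qed.

Lemma phi_stay_diag g : px g true false * ph g.+1 g.+1 = ph g g * py g true false.
Proof. expand_phi; field_pos. Qed.

Lemma phi_jump g k : (k < g)%N ->
  px g true true * ph k g + px g false true * ph k g.-1
  = ph k g * py k true true + ph k.+1 g * py k.+1 false true.
Proof. move=> /subnKC <-; move: (g - k.+1)%N => n; expand_phi; field_pos. Qed.

Lemma gap_step_prob_jump_jump g : px g true true = py g true true.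
Proof. rewrite /gap_step_prob /=; field_pos. Qed.

Lemma sum_phi m : \sum_(j < m.+1) ph j m = 1.
Proof.
elim: m => [|m IH]; first by rewrite big_ord1 /phi /qpoch !big_ord0 !(mul1r, invr1).
have nz : 1 - B * q ^+ m != 0 by apply/lt0r_neq0/one_sub_mul_expr_gt0/B_lt1.
apply: (mulIf nz); rewrite mul1r mulr_suml.
transitivity (\sum_(j < m.+1) ph j m * (1 - B * q ^+ m)); last by rewrite -mulr_suml IH mul1r.
pose a j := ph j m.+1 * (1 - B * q ^+ m).
pose b j := (1 - B / A * q ^+ (m - j)) * ph j m.
pose c j := q ^+ (m - j) * (B / A - B * q ^+ j) * ph j m.
have := @big_ord_pascal _ m a b c (fun=> 0).
rewrite big1_eq addr0 -big_split /= => ->.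
- apply: eq_bigr => j _; rewrite /b /c.
  have -> : q ^+ m = q ^+ (m - j) * q ^+ j by rewrite -exprD subnK // -ltnS.
  ring.
- by rewrite addr0 /a /b subn0 phi_pascal0.
- by move=> k lt_km; rewrite addr0 /a /b /c phi_pascal.
- by rewrite /a /c subnn expr0 mul1r phi_pascal_diag.
Qed.

Lemma intertwine_stay g (F : nat -> R) :
  px g true false * \sum_(j < g.+2) ph j g.+1 * F j
    + px g false false * \sum_(j < g.+1) ph j g * F j
  = \sum_(j < g.+1) ph j g * (py j true false * F j.+1 + py j false false * F j).
Proof.
under [RHS]eq_bigr do rewrite mulrDr.
rewrite big_split /= addrC !mulr_sumr.
apply: (big_ord_pascal (a := fun j => px g true false * (ph j g.+1 * F j))
  (b := fun j => ph j g * (py j false false * F j))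
  (c := fun j => ph j g * (py j true false * F j.+1))
  (d := fun j => px g false false * (ph j g * F j))) => [|k lt_kg|];
  rewrite !(mulrA _ _ (F _)) -?mulrDl.
- by rewrite phi_stay0.
- by rewrite phi_stay.
- by rewrite phi_stay_diag.
Qed.

(* For [g = 0] the second sum and, at [j = 0], [F j.-1] are junk: they are
   weighted by [gap_step_prob_blocked]. *)
Lemma intertwine_jump g (F : nat -> R) :
  px g true true * \sum_(j < g.+1) ph j g * F j
    + px g false true * \sum_(j < g.-1.+1) ph j g.-1 * F j
  = \sum_(j < g.+1) ph j g * (py j true true * F j + py j false true * F j.-1).
Proof.
case: g => [|g].
  by rewrite !big_ord1 !gap_step_prob_blocked !(mul0r, mulr0, addr0) gap_step_prob_jump_jump mulrCA.
under [RHS]eq_bigr do rewrite mulrDr.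
rewrite big_split /= [X in _ = _ + X]big_ord_recl /= gap_step_prob_blocked !(mul0r, mulr0, add0r).
rewrite !mulr_sumr (big_ord_recr g.+1) [in RHS](big_ord_recr g.+1) /=.
rewrite addrAC [RHS]addrAC -!big_split /=; congr (_ + _).
  by apply: eq_bigr => k _; rewrite !(mulrA _ _ (F _)) -?mulrDl phi_jump.
by rewrite mulrCA gap_step_prob_jump_jump.
Qed.

End PhiAlgebra.

Definition gap_state (x2 : int) (g : nat) : int * int := (x2 + 1 + g%:Z, x2).

Lemma gap_gap_state x2 g : gap (gap_state x2 g) = g.
Proof. rewrite /gap /=; lia. Qed.

Lemma gap_stateK (st : int * int) : st.2 < st.1 -> gap_state st.2 (gap st) = st.
Proof. case: st => x1 x2 /= lt_x21; rewrite /gap_state /gap /=; congr (_, _); lia. Qed.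

Lemma next_gap_state x2 g (h0 h1 : bool) : (h1 <= g + h0)%N ->
  Defs.next (gap_state x2 g) h0 h1 = gap_state (x2 + h1) (g + h0 - h1).
Proof. by case: h0 h1 => [] [] /=; rewrite /Defs.next /gap_state /= => ?; congr (_, _); lia. Qed.

Section FirstStep.
Variables (R : realType) (q beta s s' : R).

Lemma step_prob_gap_state x2 g h0 h1 :
  step_prob q beta s s' (gap_state x2 g) h0 h1 = gap_step_prob q beta (s ^+ 2) (s' ^+ 2) g h0 h1.
Proof. by rewrite /step_prob gap_gap_state. Qed.

Lemma fut_prob_cons_gap_state x2 g a1 a :
  fut_prob q beta s s' (gap_state x2 g) (a1 :: a) =
  \sum_(h1 : bool) (if x2 + h1 == a1 then
    \sum_(h0 : bool) gap_step_prob q beta (s ^+ 2) (s' ^+ 2) g h0 h1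
                     * fut_prob q beta s s' (gap_state (x2 + h1) (g + h0 - h1)) a
  else 0).
Proof.
rewrite /= exchange_big; apply: eq_bigr => h1 _.
case: (x2 + h1 == a1); last by rewrite big1.
apply: eq_bigr => h0 _; rewrite step_prob_gap_state.
have [le_h1 | ] := leqP h1 (g + h0); first by rewrite next_gap_state.
by case: h0 h1 g => [] [] [] //= _; rewrite gap_step_prob_blocked !mul0r.
Qed.

End FirstStep.

Section Intertwining.
Variables (R : realType) (q beta s0 s1 : R).
Hypotheses (q_ge0 : 0 <= q) (q_lt1 : q < 1) (beta_ge0 : 0 <= beta).
Hypotheses (s1_lt_s0 : s1 ^+ 2 < s0 ^+ 2) (s0_lt1 : s0 ^+ 2 < 1).

Local Notation ph j m := (phi q (s1 ^+ 2 / s0 ^+ 2) (s1 ^+ 2) j m).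

Lemma fut_prob_intertwining a x2 g :
  fut_prob q beta s0 s1 (gap_state x2 g) a =
  \sum_(j < g.+1) ph j g * fut_prob q beta s1 s0 (gap_state x2 j) a.
Proof.
have s1_ge0 : 0 <= s1 ^+ 2 := sqr_ge0 s1.
elim: a x2 g => [|a1 a IH] x2 g.
  by under eq_bigr do rewrite /= mulr1; rewrite (sum_phi q_ge0 q_lt1 s1_ge0).
rewrite fut_prob_cons_gap_state.
under [RHS]eq_bigr do rewrite fut_prob_cons_gap_state mulr_sumr.
rewrite exchange_big; apply: eq_bigr => h1 _.
case: (x2 + h1 == a1); last by rewrite big1 // => j _; rewrite mulr0.
case: h1.
- under [RHS]eq_bigr do rewrite big_bool /= addnK addn0 subn1.
  rewrite big_bool /= addnK addn0 subn1 !IH.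
  exact: (intertwine_jump q_ge0 q_lt1 beta_ge0 s1_ge0 s1_lt_s0 s0_lt1 g
            (fun j => fut_prob q beta s1 s0 (gap_state (x2 + 1) j) a)).
- under [RHS]eq_bigr do rewrite big_bool /= !subn0 addn1 addn0 addr0.
  rewrite big_bool /= !subn0 addn1 addn0 addr0 !IH.
  exact: (intertwine_stay q_ge0 q_lt1 beta_ge0 s1_ge0 s1_lt_s0 s0_lt1 g
            (fun j => fut_prob q beta s1 s0 (gap_state x2 j) a)).
Qed.

Lemma traj2_prob_intertwining a x2 g :
  traj2_prob q beta s0 s1 (gap_state x2 g) a =
  \sum_(j < g.+1) ph j g * traj2_prob q beta s1 s0 (gap_state x2 j) a.
Proof.
case: a => [|a0 a] /=; first exact: (fut_prob_intertwining [::]).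
case: (x2 == a0); last by rewrite big1 // => j _; rewrite mulr0.
exact: fut_prob_intertwining.
Qed.

End Intertwining.

Theorem corollary8p5 (R : realType) (q beta s0 s1 : R) (x10 x20 : int) :
  0 <= q -> q < 1 -> 0 < beta ->
  -1 < s0 -> s0 < 0 -> -1 < s1 -> s1 < 0 -> `|s1| < `|s0| ->
  x20 < x10 ->
  forall a : seq int,
    traj2_prob q beta s0 s1 (x10, x20) a =
    \sum_(j < (absz (x10 - x20 - 1)%R).+1)
       phi q (s1 ^+ 2 / s0 ^+ 2) (s1 ^+ 2) j (absz (x10 - x20 - 1)%R)
       * traj2_prob q beta s1 s0 (x20 + 1 + (j : nat)%:Z, x20) a.
Proof.
move=> q_ge0 q_lt1 beta_gt0 s0_gtN1 s0_lt0 _ s1_lt0 abs_s1_lt_s0 x20_lt_x10 a.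
rewrite !ltr0_norm // in abs_s1_lt_s0.
have s1_lt_s0 : s1 ^+ 2 < s0 ^+ 2 by nra.
have s0_lt1 : s0 ^+ 2 < 1 by nra.
rewrite -(gap_stateK (st := (x10, x20))) //.
exact: (traj2_prob_intertwining q_ge0 q_lt1 (ltW beta_gt0) s1_lt_s0 s0_lt1).
Qed.
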